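(* Let $\mathbb{F}_q$ have characteristic $p\neq 2$, let $f(X)=aX^2+c\in\mathbb{F}_q[X]$ with $a\neq0$, let $r\ge 1$, and suppose $f^i(0)\neq f^j(0)$ for all $0\le i<j\le r$. Then for every $0\le j\le r-1$, writing $D=2^j$ and $F^j(U,W)=W^Df^j(U/W)$, the gradient of the form $F^j(U,W)+F^j(V,W)$ vanishes at no point $(u,v,w)\neq(0,0,0)$ of $\overline{\mathbb{F}_q}^{\,3}$; consequently the polynomial $f^j(X)+f^j(Y)$ is absolutely irreducible (irreducible over $\overline{\mathbb{F}_q}$).
   Context: The iterates are $f^0(X)=X$, $f^{j+1}(X)=f(f^j(X))$; $\overline{\mathbb{F}_q}$ is an algebraic closure of $\mathbb{F}_q$. *)

From HB Require Import structures.
From mathcomp Require Import all_boot all_order all_algebra all_field.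
Set Implicit Arguments. Unset Strict Implicit. Unset Printing Implicit Defensive.
Import GRing.Theory.
Local Open Scope ring_scope.

Definition piter (R : nzRingType) (f : {poly R}) (j : nat) : {poly R} :=
  iter j (fun g => f \Po g) 'X.

(* Bivariate polynomials are {poly {poly R}}; following polyXY, the outer
   variable is evaluated first: P.[x, y] = P.[x%:P].[y].  *)

(* Homogenisation F(U,W) = W^D p(U/W) (meant for size p <= D.+1), as a
   bivariate polynomial with outer variable U and inner variable W. *)
Definition homog (R : nzRingType) (D : nat) (p : {poly R}) : {poly {poly R}} :=
  \sum_(i < D.+1) (p`_i *: 'X^(D - i))%:P * 'X^i.

Definition dOuter (R : nzRingType) (P : {poly {poly R}}) : {poly {poly R}} :=
  P^`().
Definition dInner (R : nzRingType) (P : {poly {poly R}}) : {poly {poly R}} :=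
  map_poly (@deriv R) P.

(* Irreducibility in L[X,Y]: non-constant, and any factorisation has a
   constant factor (units of L[X,Y] are the nonzero constants). *)
Definition bconst (R : nzRingType) (P : {poly {poly R}}) : bool :=
  P == ((P`_0)`_0)%:P%:P.
Definition irreducible2 (R : nzRingType) (P : {poly {poly R}}) : Prop :=
  ~~ bconst P /\ forall A B : {poly {poly R}}, P = A * B -> bconst A \/ bconst B.

(* At a projective point (u : v : w) with w != 0, Euler's relation turns the vanishing
   of the gradient into a singular point (x, y) = (u/w, v/w) of g(X) + g(Y) = 0, where
   g = f^j: g'(x) = g'(y) = 0 and g(x) + g(y) = 0.  Since 0 is the only critical point of
   f, critical values of f^j are points f^m(0) of the critical orbit, and as f is even,
   f^m(0) + f^n(0) = 0 forces f^(m+1)(0) = f^(n+1)(0) or f^m(0) = 0 = f^0(0), against the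
   distinctness of the orbit.  At w = 0 the U-derivative is D g_D u^(D-1).
   If g(X) + g(Y) = A B with A, B nonconstant, a common zero of A and B would be singular,
   so the resultant gives U A + V B = 1.  The leading forms of A and B divide
   g_D (X^D + Y^D), which is separable, so the two curves do not meet at infinity either,
   contradicting Bezout's theorem.  That last step is done by hand: after the shear
   Q(X, Y) |-> Q(X, XY), leading forms become leading X-coefficients, and a descent on
   the X-degree of V rules out U A + V B = 1. *)

From HB Require Import structures.
From mathcomp Require Import all_boot all_order all_algebra all_field.
From mathcomp Require Import ring zify.
Set Implicit Arguments.
Unset Strict Implicit.
Unset Printing Implicit Defensive.
Import GRing.Theory.
Local Open Scope ring_scope.

Definition smooth_sum (L : fieldType) (g : {poly L}) : Prop :=
  forall x y : L, g^`().[x] = 0 -> g^`().[y] = 0 -> g.[x] + g.[y] != 0.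

Lemma piterS (R : nzRingType) (f : {poly R}) j : piter f j.+1 = f \Po piter f j.
Proof. by []. Qed.

Section QuadraticIteration.

Variables (F L : fieldType) (iota : {rmorphism F -> L}) (a c : F).
Hypotheses (two_neq0 : 2%:R != 0 :> F) (a_neq0 : a != 0).

Let f : {poly F} := a *: 'X^2 + c%:P.

Lemma size_quad : size f = 3%N.
Proof.
rewrite size_polyDl size_scale // ?size_polyXn //.
by rewrite (leq_ltn_trans (size_polyC_leq1 _)).
Qed.

Lemma size_piter_quad j : size (piter f j) = (2 ^ j).+1.
Proof.
elim: j => [|j IH]; first by rewrite /piter /= size_polyX.
have f_neq0 : f != 0 by rewrite -size_poly_eq0 size_quad.
have fj_neq0 : piter f j.+1 != 0 by rewrite piterS comp_poly_eq0 // IH ltnS expn_gt0.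
by rewrite (polySpred fj_neq0) piterS size_comp_poly IH size_quad //= expnS.
Qed.

Lemma horner_quadN z : f.[- z] = f.[z].
Proof. by rewrite /f !(hornerD, hornerZ, hornerXn, hornerC) sqrrN. Qed.

Lemma piter_quad_critical_value j (x : L) :
  (map_poly iota (piter f j))^`().[x] = 0 ->
  exists2 m, (0 < m <= j)%N & (map_poly iota (piter f j)).[x] = iota (piter f m).[0].
Proof.
have two_neq0L : 2%:R != 0 :> L by rewrite -(rmorph_nat iota) fmorph_eq0.
have a_neq0L : iota a != 0 by rewrite fmorph_eq0.
elim: j x => [|j IH] x.
  by rewrite /piter /= map_polyX derivX hornerC => /eqP; rewrite oner_eq0.
rewrite piterS map_comp_poly deriv_comp hornerM !horner_comp => /eqP.
rewrite mulf_eq0 => /orP[|/eqP/IH [m /andP[m_gt0 mj] ->]]; last first.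
  by exists m.+1; rewrite ?ltnS ?mj // horner_map /= -horner_comp -piterS.
rewrite /f rmorphD /= map_polyZ map_polyXn map_polyC /= derivD derivZ derivXn derivC.
rewrite !(hornerD, hornerZ, hornerMn, hornerX, hornerC) /= addr0 mulf_eq0 (negPf a_neq0L).
rewrite -mulr2n -mulr_natl mulf_eq0 (negPf two_neq0L) /= => /eqP ->.
exists 1%N => //.
by rewrite /piter /= comp_polyXr !hornerE rmorphD rmorphM /= !rmorph0 !mulr0.
Qed.

Lemma piter_quad_smooth_sum r :
  (forall i j : nat, (i < j <= r)%N -> (piter f i).[0] != (piter f j).[0]) ->
  forall j, (j < r)%N -> smooth_sum (map_poly iota (piter f j)).
Proof.
move=> orbit_uniq j jr x y /piter_quad_critical_value [m /andP[m_gt0 mj] ->].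
move=> /piter_quad_critical_value [n /andP[n_gt0 nj] ->].
rewrite -rmorphD fmorph_eq0; apply/negP => /eqP sum0.
have orbitS : (piter f m.+1).[0] = (piter f n.+1).[0].
  by rewrite !piterS !horner_comp -(addr0_eq sum0) horner_quadN.
have [mn|nm|eq_mn] := ltngtP m n.
- have := orbit_uniq m.+1 n.+1; rewrite ltnS mn orbitS eqxx (leq_ltn_trans nj jr).
  by move=> /(_ isT).
- have := orbit_uniq n.+1 m.+1; rewrite ltnS nm orbitS eqxx (leq_ltn_trans mj jr).
  by move=> /(_ isT).
- move/eqP: sum0; rewrite eq_mn -mulr2n -mulr_natl mulf_eq0 (negPf two_neq0) /= => /eqP fn0.
  have := orbit_uniq 0%N n; rewrite n_gt0 (leq_trans nj (ltnW jr)) fn0.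
  by rewrite /piter /= hornerX eqxx => /(_ isT).
Qed.

End QuadraticIteration.

Lemma size_deriv_le (R : nzRingType) (p : {poly R}) : (size p^`() <= size p)%N.
Proof. exact: leq_trans (size_poly _ _) (leq_pred _). Qed.

Lemma size_map_poly_le (R S : nzRingType) (f : R -> S) (p : {poly R}) :
  (size (map_poly f p) <= size p)%N.
Proof. exact: size_poly. Qed.

Lemma horner2_wide (R : comNzRingType) (P : {poly {poly R}}) n u w :
  (size P <= n)%N -> P.[u, w] = \sum_(i < n) (P`_i).[w] * u ^+ i.
Proof.
move=> sP; rewrite (horner_coef_wide _ sP) horner_sum; apply: eq_bigr => i _.
by rewrite hornerM -rmorphXn hornerC.
Qed.

Section Homogenisation.

Variables (L : fieldType) (D : nat) (p : {poly L}).
Hypotheses (D_gt0 : (0 < D)%N) (size_p : (size p <= D.+1)%N).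

Lemma homogE : homog D p = \poly_(i < D.+1) (p`_i *: 'X^(D - i)).
Proof. by rewrite /homog poly_def; apply: eq_bigr => i _; rewrite mul_polyC. Qed.

Lemma size_dOuter_homog : (size (dOuter (homog D p)) <= D.+1)%N.
Proof. by rewrite (leq_trans (size_deriv_le _)) // homogE size_poly. Qed.

Lemma size_dInner_homog : (size (dInner (homog D p)) <= D.+1)%N.
Proof. by rewrite (leq_trans (size_map_poly_le _ _)) // homogE size_poly. Qed.

Lemma dOuter_homog_dehomog x w :
  (dOuter (homog D p)).[x * w, w] = w ^+ D.-1 * p^`().[x].
Proof.
rewrite (horner2_wide _ _ size_dOuter_homog).
rewrite (horner_coef_wide _ (leq_trans (size_deriv_le _) size_p)) mulr_sumr.
apply: eq_bigr => i _; rewrite /dOuter !coef_deriv homogE coef_poly ltnS hornerMn.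
have [iD|iD] := leqP i.+1 D; last first.
  by rewrite horner0 mul0rn mul0r nth_default ?mul0rn ?mul0r ?mulr0 // (leq_trans size_p).
rewrite hornerZ hornerXn exprMn.
have -> : w ^+ D.-1 = w ^+ (D - i.+1) * w ^+ i by rewrite -exprD; congr (_ ^+ _); lia.
ring.
Qed.

(* Euler's relation: U dF/dU + W dF/dW = D F, read at U = x W. *)
Lemma dInner_homog_dehomog x w :
  (dInner (homog D p)).[x * w, w] = w ^+ D.-1 * (D%:R * p.[x] - x * p^`().[x]).
Proof.
have size_Xp' : (size ('X * p^`())%R <= D.+1)%N.
  have [->|p_neq0] := eqVneq p 0; first by rewrite deriv0 mulr0 size_poly0.
  rewrite (leq_trans (size_polyMleq _ _)) // size_polyX /= (leq_trans _ size_p) //.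
  exact: lt_size_deriv.
have -> : x * p^`().[x] = ('X * p^`()).[x] by rewrite hornerM hornerX.
rewrite (horner2_wide _ _ size_dInner_homog) (horner_coef_wide _ size_Xp').
rewrite (horner_coef_wide _ size_p) mulr_sumr -sumrB mulr_sumr; apply: eq_bigr => i _.
have coefXp' : ('X * p^`())`_i = p`_i *+ i.
  by rewrite coefXM; case: (nat_of_ord i) => [|k] //=; rewrite coef_deriv.
rewrite /dInner coef_map_id0 ?deriv0 // homogE coef_poly ltn_ord coefXp'.
rewrite derivZ derivXn hornerZ hornerMn hornerXn exprMn.
have iD : (i <= D)%N by rewrite -ltnS.
have [iD'|iD'] := ltnP i D.
  have -> : w ^+ D.-1 = w ^+ (D - i).-1 * w ^+ i by rewrite -exprD; congr (_ ^+ _); lia.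
  have Di : (D - i)%:R = D%:R - i%:R :> L by rewrite natrB // ltnW.
  rewrite -[_ *+ (D - i)]mulr_natr Di -[p`_i *+ i]mulr_natr; ring.
have -> : nat_of_ord i = D by apply/eqP; rewrite eqn_leq iD iD'.
by rewrite subnn mulr0n mulr0 mul0r -[p`_D *+ D]mulr_natr; ring.
Qed.

Lemma dOuter_homog_at_infinity u :
  (dOuter (homog D p)).[u, 0] = (p`_D *+ D) * u ^+ D.-1.
Proof.
have lt_pred : (D.-1 < D.+1)%N by rewrite (leq_ltn_trans (leq_pred D)).
rewrite (horner2_wide _ _ size_dOuter_homog) (bigD1 (Ordinal lt_pred)) //=.
rewrite big1 ?addr0 => [|i /eqP ne_i].
  rewrite /dOuter coef_deriv homogE coef_poly prednK // ltnSn.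
  by rewrite hornerMn hornerZ hornerXn subnn expr0 mulr1.
rewrite /dOuter coef_deriv homogE coef_poly hornerMn.
case: ifP => iD; last by rewrite horner0 mul0rn mul0r.
rewrite hornerZ hornerXn expr0n.
have -> : (D - i.+1 == 0)%N = false.
  by apply/negbTE/eqP => Di; apply: ne_i; apply: val_inj => /=; move: Di iD; clear; lia.
by rewrite mulr0 mul0rn mul0r.
Qed.

End Homogenisation.

Lemma homog_sum_gradient_neq0 (L : fieldType) (g : {poly L}) D :
  size g = D.+1 -> (0 < D)%N -> D%:R != 0 :> L -> smooth_sum g ->
  forall u v w : L, (u, v, w) != (0, 0, 0) ->
    ~ [/\ (dOuter (homog D g)).[u, w] = 0, (dOuter (homog D g)).[v, w] = 0
        & (dInner (homog D g)).[u, w] + (dInner (homog D g)).[v, w] = 0].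
Proof.
move=> size_g D_gt0 D_neq0 smooth u v w uvw_neq0 [dU dV dW].
have size_g_le : (size g <= D.+1)%N by rewrite size_g.
have lead_neq0 : g`_D != 0.
  by rewrite -[D]/(D.+1.-1) -size_g -lead_coefE lead_coef_eq0 -size_poly_eq0 size_g.
have [w0 | w_neq0] := eqVneq w 0.
  move: dU dV; rewrite w0 !dOuter_homog_at_infinity // => /eqP + /eqP.
  rewrite !mulf_eq0 -mulr_natr !mulf_eq0 (negPf lead_neq0) (negPf D_neq0) !expf_eq0 /=.
  case: (ltnP 0 D.-1) => //= _ /eqP u0 /eqP v0.
  by move: uvw_neq0; rewrite u0 v0 w0 eqxx.
have wD_neq0 : w ^+ D.-1 != 0 by rewrite expf_neq0.
move: dU dV dW; rewrite -[u](divfK w_neq0) -[v](divfK w_neq0).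
rewrite !dOuter_homog_dehomog // !dInner_homog_dehomog //.
move=> /eqP; rewrite mulf_eq0 (negPf wD_neq0) /= => /eqP dx.
move=> /eqP; rewrite mulf_eq0 (negPf wD_neq0) /= => /eqP dy.
rewrite dx dy !mulr0 !subr0 -mulrDr => /eqP; rewrite mulf_eq0 (negPf wD_neq0) /=.
by rewrite -mulrDr mulf_eq0 (negPf D_neq0) /=; apply/negP; apply: smooth.
Qed.

Section Shear.

Variable R : comNzRingType.
Implicit Types (P Q : {poly {poly R}}) (q : {poly R}).

(* The subring R[X, XY] of R[X, Y]. *)
Definition triangular P : Prop := forall n, (size (P`_n)%R <= n.+1)%N.

Lemma triangularD P Q : triangular P -> triangular Q -> triangular (P + Q).
Proof. by move=> tP tQ n; rewrite coefD (leq_trans (size_polyD _ _)) // geq_max tP tQ. Qed.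

Lemma triangularN P : triangular P -> triangular (- P).
Proof. by move=> tP n; rewrite coefN size_polyN. Qed.

Lemma triangularM P Q : triangular P -> triangular Q -> triangular (P * Q).
Proof.
move=> tP tQ n; rewrite coefM (leq_trans (size_sum _ _ _)) //.
apply/bigmax_leqP => i _; rewrite (leq_trans (size_polyMleq _ _)) //.
by have := tP i; have := tQ (n - i)%N; have := ltn_ord i; clear; lia.
Qed.

Lemma triangular_sum (I : finType) (P_ : I -> {poly {poly R}}) :
  (forall i, triangular (P_ i)) -> triangular (\sum_i P_ i).
Proof.
move=> tP; apply: (big_ind triangular) => //; last exact: triangularD.
by move=> n; rewrite coef0 size_poly0.
Qed.

Lemma triangular_monomial q n : (size q <= n.+1)%N -> triangular (q%:P * 'X^n).
Proof.
move=> sq i; rewrite coefCM coefXn.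
by case: eqP => [->|_]; rewrite ?mulr1 ?mulr0 ?size_poly0.
Qed.

Lemma size_lead_coef_triangular P :
  triangular P -> (size (lead_coef P) <= size P)%N.
Proof.
move=> tri_P; have [->|P_neq0] := eqVneq P 0; first by rewrite lead_coef0 !size_poly0.
by rewrite lead_coefE (leq_trans (tri_P _)) // prednK // lt0n size_poly_eq0.
Qed.

Let XY : {poly {poly R}} := 'X * ('X : {poly R})%:P.

Lemma commr_XY : commr_rmorph (polyC \o polyC) XY.
Proof. by move=> x; rewrite /GRing.comm mulrC. Qed.

Definition shearY : {rmorphism {poly R} -> {poly {poly R}}} := horner_morph commr_XY.

Lemma commr_shearY_X : commr_rmorph shearY 'X.
Proof. by move=> x; rewrite /GRing.comm mulrC. Qed.

(* shear Q = Q(X, XY); it turns the total degree of Q into its X-degree. *)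
Definition shear : {rmorphism {poly {poly R}} -> {poly {poly R}}} :=
  horner_morph commr_shearY_X.

Lemma shearYE q : shearY q = \sum_(k < size q) (q`_k *: 'X^k)%:P * 'X^k.
Proof.
have -> : shearY q = (map_poly (polyC \o polyC) q).[XY] by [].
rewrite horner_coef size_map_inj_poly //; last by move=> x y /= /polyC_inj /polyC_inj.
apply: eq_bigr => k _; rewrite coef_map /= /XY exprMn -rmorphXn /= -mul_polyC rmorphM /=; ring.
Qed.

Lemma shearE Q : shear Q = \sum_(i < size Q) shearY Q`_i * 'X ^+ i.
Proof.
have -> : shear Q = (map_poly shearY Q).['X] by [].
rewrite (@horner_coef_wide _ (size Q)) ?size_map_poly_le //.
by apply: eq_bigr => k _; rewrite coef_map.
Qed.

Lemma shearC q : shear q%:P = shearY q.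
Proof. exact: horner_morphC. Qed.

Lemma shearY_C x : shearY x%:P = x%:P%:P.
Proof. exact: horner_morphC. Qed.

Lemma triangular_shear Q : triangular (shear Q).
Proof.
rewrite shearE; apply: triangular_sum => i; rewrite shearYE mulr_suml.
apply: triangular_sum => k; rewrite -mulrA -exprD.
apply: triangular_monomial.
by rewrite (leq_trans (size_scale_leq _ _)) // size_polyXn ltnS leq_addr.
Qed.

Lemma shear_eval0 Q :
  map_poly (horner_eval 0) (shear Q) = map_poly (horner_eval 0) Q.
Proof.
have shearY0 q : map_poly (horner_eval 0) (shearY q) = q.[0]%:P.
  rewrite shearYE rmorph_sum horner_coef rmorph_sum; apply: eq_bigr => k _.
  rewrite [LHS]rmorphM /= map_polyC map_polyXn /= horner_evalE hornerZ hornerXn.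
  by case: (nat_of_ord k) => [|n]; rewrite ?expr0 ?mulr1 // expr0n mulr0 polyC0 mul0r.
rewrite shearE rmorph_sum.
under eq_bigr => i _ do rewrite rmorphM rmorphXn /= map_polyX shearY0.
by rewrite [in RHS]/map_poly poly_def; apply: eq_bigr => i _; rewrite mul_polyC.
Qed.

Lemma leq_size_shear Q x : lead_coef Q = x%:P -> x != 0 -> (size Q <= size (shear Q))%N.
Proof.
move=> lQ x_neq0; rewrite -(size_map_poly_id0 (f := horner_eval 0)); last first.
  by rewrite lQ /= horner_evalE hornerC.
by rewrite -shear_eval0 size_map_poly_le.
Qed.

Lemma shear_sum (g : {poly R}) D : size g = D.+1 ->
  shear (g^:P + g%:P) = \poly_(i < D.+1) (g`_i *: (1 + 'X^i)).
Proof.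
move=> size_g; rewrite rmorphD /= shearC shearE shearYE size_map_polyC size_g.
rewrite -big_split /= poly_def; apply: eq_bigr => i _.
rewrite coef_map /= shearY_C scalerDr -!mul_polyC mulr1 rmorphD /=; ring.
Qed.

End Shear.

Arguments shear {R}.

Lemma size_sub_lt (R : nzRingType) (p q : {poly R}) :
  p != 0 -> size q = size p -> lead_coef q = lead_coef p -> (size (p - q)%R < size p)%N.
Proof.
move=> p_neq0 size_q lead_q; rewrite (polySpred p_neq0) ltnS.
apply/leq_sizeP => j; rewrite leq_eqVlt => /orP[/eqP <-|lt_j].
  by rewrite coefB -lead_coefE -lead_q lead_coefE size_q subrr.
by rewrite coefB !nth_default ?subrr // ?size_q (leq_trans _ lt_j) // leqSpred.
Qed.

Lemma size_lead_coef_triangular_factor (R : idomainType) (P Q : {poly {poly R}}) :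
  triangular P -> triangular Q -> P != 0 -> Q != 0 ->
  size (lead_coef (P * Q)) = size (P * Q) -> size (lead_coef P) = size P.
Proof.
move=> tri_P tri_Q P_neq0 Q_neq0; rewrite lead_coefM !size_mul ?lead_coef_eq0 //.
have := size_lead_coef_triangular tri_P; have := size_lead_coef_triangular tri_Q.
have : (0 < size (lead_coef P))%N by rewrite lt0n size_poly_eq0 lead_coef_eq0.
have : (0 < size (lead_coef Q))%N by rewrite lt0n size_poly_eq0 lead_coef_eq0.
by move: (size (lead_coef P)) (size (lead_coef Q)) (size P) (size Q); lia.
Qed.

Section TriangularBezout.

Variables (L : fieldType) (pa pb : {poly {poly L}}).
Hypotheses (tri_a : triangular pa) (tri_b : triangular pb).
Hypothesis size_lead_a : size (lead_coef pa) = size pa.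
Hypothesis coprime_lead : coprimep (lead_coef pa) (lead_coef pb).
Hypotheses (size_a_gt1 : (1 < size pa)%N) (size_b_gt1 : (1 < size pb)%N).

Let pa_neq0 : pa != 0. Proof. by rewrite -size_poly_eq0 -lt0n ltnW. Qed.
Let pb_neq0 : pb != 0. Proof. by rewrite -size_poly_eq0 -lt0n ltnW. Qed.

(* The leading X-coefficients of u pa and v pb cancel, so lead_coef pa divides
   lead_coef v by coprimality, and subtracting a multiple of pa lowers size v;
   the hypothesis on size (lead_coef pa) keeps that multiple triangular. *)
Lemma triangular_bezout_step u v :
  triangular u -> triangular v -> u * pa + v * pb = 1 -> v != 0 ->
  exists u' v', [/\ triangular u', triangular v', u' * pa + v' * pb = 1
                  & (size v' < size v)%N].
Proof.
move=> tri_u tri_v bezout v_neq0.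
set a := lead_coef pa; set lv := lead_coef v.
have size_vb : (1 < size (v * pb)%R)%N.
  by rewrite size_mul // (polySpred v_neq0) addSn /= (leq_trans size_b_gt1) ?leq_addl.
have lead_u : lead_coef u * a = - (lv * lead_coef pb).
  have -> : - (lv * lead_coef pb) = lead_coef (- (v * pb) + 1).
    by rewrite lead_coefDl ?lead_coefN ?lead_coefM // size_polyN size_poly1.
  by rewrite -lead_coefM -bezout; congr lead_coef; ring.
have a_dvd_lv : a %| lv.
  by rewrite -(Gauss_dvdpl _ coprime_lead) -dvdpNr -lead_u dvdp_mulIr.
have a_neq0 : a != 0 by rewrite lead_coef_eq0.
have lv_neq0 : lv != 0 by rewrite lead_coef_eq0.
have size_lv : (size lv <= size v)%N := size_lead_coef_triangular tri_v.
have size_av : (size pa <= size v)%N.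
  by rewrite -size_lead_a (leq_trans (dvdp_leq lv_neq0 a_dvd_lv)).
set w := (lv %/ a)%:P * 'X^(size v - size pa).
have tri_w : triangular w.
  apply: triangular_monomial; rewrite size_divp // size_lead_a.
  by move: size_lv size_av size_a_gt1; move: (size lv) (size v) (size pa); lia.
have quot_neq0 : lv %/ a != 0.
  by apply: contraNneq lv_neq0 => q0; rewrite -(divpK a_dvd_lv) q0 mul0r.
exists (u + w * pb), (v - w * pa); split.
- exact: triangularD tri_u (triangularM tri_w tri_b).
- exact: triangularD tri_v (triangularN (triangularM tri_w tri_a)).
- by rewrite -bezout; ring.
apply: size_sub_lt => //.
  by rewrite -mulrA size_Cmul // mulrC size_mulXn // subnK.
by rewrite !lead_coefM lead_coefC lead_coefXn mulr1 divpK.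
Qed.

Lemma triangular_no_bezout u v : triangular u -> triangular v -> u * pa + v * pb != 1.
Proof.
have no_unit (u' : {poly {poly L}}) : u' * pa != 1.
  apply/eqP => e; have u_neq0 : u' != 0.
    by apply: contra_eq_neq e => ->; rewrite mul0r eq_sym oner_neq0.
  have := congr1 (fun p : {poly {poly L}} => size p) e.
  rewrite /= size_mul // size_poly1 (polySpred u_neq0) addSn /=.
  by move: size_a_gt1; move: (size pa) (size u').-1; lia.
move=> tri_u tri_v; apply/eqP; move: {2}(size v) (leqnn (size v)) => n.
elim: n u v tri_u tri_v => [|n IH] u v tri_u tri_v size_v bezout.
  move: size_v bezout; rewrite leqn0 size_poly_eq0 => /eqP ->.
  by rewrite mul0r addr0 => /eqP; exact/negP/no_unit.
have [v0|v_neq0] := eqVneq v 0.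
  by move: bezout; rewrite v0 mul0r addr0 => /eqP; exact/negP/no_unit.
have [u' [v' [tri_u' tri_v' bezout' size_v']]] :=
  triangular_bezout_step tri_u tri_v bezout v_neq0.
by apply: (IH u' v') => //; rewrite -ltnS (leq_trans size_v').
Qed.

End TriangularBezout.

Lemma bconst_size_le1 (R : nzRingType) (Q : {poly {poly R}}) :
  (size Q <= 1)%N -> (size (Q`_0)%R <= 1)%N -> bconst Q.
Proof. by move=> sQ sQ0; rewrite /bconst {1}(size1_polyC sQ) {1}(size1_polyC sQ0). Qed.

Lemma bconstN_size_gt1 (R : nzRingType) (A : {poly {poly R}}) a :
  lead_coef A = a%:P -> ~~ bconst A -> (1 < size A)%N.
Proof.
move=> lead_A; apply: contraR; rewrite -leqNgt => size_A.
apply: bconst_size_le1 (size_A) _; move: lead_A; rewrite lead_coefE.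
have -> : (size A).-1 = 0%N by case: (size A) size_A => [|[]].
by move=> ->; apply: size_polyC_leq1.
Qed.

Lemma lead_coef_factor_const (R : idomainType) (A B : {poly {poly R}}) c :
  lead_coef (A * B) = c%:P -> c != 0 -> exists2 a, a != 0 & lead_coef A = a%:P.
Proof.
move=> lead_AB c_neq0; apply/size_poly1P.
have := size_mul_eq1 (lead_coef A) (lead_coef B).
by rewrite -lead_coefM lead_AB size_polyC c_neq0 eqxx => /esym/andP[].
Qed.

Lemma separable_1addXn (R : fieldType) n :
  n%:R != 0 :> R -> separable_poly (1 + 'X^n : {poly R}).
Proof.
move=> n_neq0; have n_gt0 : (0 < n)%N by case: n n_neq0; rewrite ?eqxx.
rewrite unlock /separable_poly; apply/Bezout_coprimepP; exists (1, - (n%:R^-1 *: 'X)) => /=.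
rewrite derivD derivC add0r derivXn.
rewrite mulNr -scalerAl mulrnAr -scaler_nat scalerA mulVf // scale1r.
by rewrite -exprS prednK // mul1r addrK eqpxx.
Qed.

(* Without common zeros, the resultant in L[Y] has no root, hence is a nonzero constant. *)
Lemma bezout_of_no_common_root (L : closedFieldType) (A B : {poly {poly L}}) a b :
  lead_coef A = a%:P -> a != 0 -> lead_coef B = b%:P -> b != 0 ->
  (1 < size A)%N -> (1 < size B)%N ->
  (forall x y, A.[x%:P].[y] = 0 -> B.[x%:P].[y] = 0 -> False) ->
  exists U V, U * A + V * B = 1.
Proof.
move=> lead_A a_neq0 lead_B b_neq0 size_A size_B no_common.
have res_neq0 y : (resultant A B).[y] != 0.
  have horner_eval2 Q x : (map_poly (horner_eval y) Q).[x] = Q.[x%:P].[y].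
    by have := horner_map (horner_eval y) Q x%:P; rewrite /= !horner_evalE hornerC.
  change (horner_eval y (resultant A B) != 0).
  rewrite map_resultant ?lead_A ?lead_B /= ?horner_evalE ?hornerC //.
  apply/negP; rewrite resultant_eq0 => size_gcd.
  have /closed_rootP [x] : size (gcdp (map_poly (horner_eval y) A)
                                      (map_poly (horner_eval y) B)) != 1%N.
    by rewrite neq_ltn size_gcd orbT.
  by rewrite root_gcd => /andP[/eqP Ax /eqP Bx]; apply: (no_common x y); rewrite -horner_eval2.
have /size_poly1P [c c_neq0 res_c] : size (resultant A B) == 1%N.
  by apply/negPn/negP => /closed_rootP [y]; rewrite rootE (negPf (res_neq0 y)).
have [[u v] _ uv] := resultant_in_ideal size_A size_B.
exists ((c^-1)%:P%:P * u), ((c^-1)%:P%:P * v).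
by rewrite -!mulrA -mulrDr -uv res_c /= -!polyCM mulVf.
Qed.

Section SumOfIterates.

Variables (L : closedFieldType) (g : {poly L}) (D : nat).
Hypotheses (size_g : size g = D.+1) (D_gt0 : (0 < D)%N) (D_neq0 : D%:R != 0 :> L).
Hypothesis smooth : smooth_sum g.

Let P : {poly {poly L}} := g^:P + g%:P.

Lemma size_sum_lead_coef : size P = D.+1 /\ lead_coef P = (lead_coef g)%:P.
Proof.
have lt_size : (size g%:P < size g^:P)%N.
  by rewrite size_map_polyC size_g (leq_ltn_trans (size_polyC_leq1 _)).
rewrite size_polyDl // lead_coefDl // size_map_polyC size_g; split => //.
by rewrite lead_coef_map_eq // polyC_eq0 lead_coef_eq0 -size_poly_eq0 size_g.
Qed.

Lemma factors_no_common_root (A B : {poly {poly L}}) : P = A * B ->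
  forall x y, A.[x%:P].[y] = 0 -> B.[x%:P].[y] = 0 -> False.
Proof.
move=> PAB x y Axy Bxy.
have evalP : P.[x%:P] = (g.[x])%:P + g by rewrite hornerD hornerC horner_map.
have sum0 : g.[x] + g.[y] = 0.
  have := congr1 (fun Q => Q.[x%:P].[y]) PAB; rewrite /= evalP hornerD hornerC.
  by rewrite !hornerM Axy mul0r.
have dy : g^`().[y] = 0.
  have := congr1 (fun Q => (Q.[x%:P])^`().[y]) PAB; rewrite /= evalP derivD derivC add0r.
  by rewrite hornerM derivM hornerD !hornerM Axy Bxy !mulr0 mul0r addr0.
have dx : g^`().[x] = 0.
  have := congr1 (fun Q => (Q^`()).[x%:P].[y]) PAB.
  rewrite /= /P derivD derivC addr0 deriv_map horner_map /= hornerC.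
  by rewrite derivM hornerD !hornerM hornerD !hornerM Axy Bxy mulr0 mul0r addr0.
by move: (smooth dx dy); rewrite sum0 eqxx.
Qed.

(* The shear of g(X) + g(Y) has leading X-coefficient g_D (1 + Y^D). *)
Lemma shear_factors_lead_coef (A B : {poly {poly L}}) :
  P = A * B -> shear A != 0 -> shear B != 0 ->
  coprimep (lead_coef (shear A)) (lead_coef (shear B))
  /\ size (lead_coef (shear A)) = size (shear A).
Proof.
move=> PAB shear_A_neq0 shear_B_neq0.
have shear_AB : shear A * shear B = \poly_(i < D.+1) (g`_i *: (1 + 'X^i)).
  by rewrite -rmorphM -PAB (shear_sum size_g).
have lead_g : g`_D = lead_coef g by rewrite lead_coefE size_g.
have lead_g_neq0 : lead_coef g != 0 by rewrite lead_coef_eq0 -size_poly_eq0 size_g.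
have size_1X : size (1 + 'X^D : {poly L}) = D.+1 by rewrite addrC -polyC1 size_XnaddC.
have lead_neq0 : g`_D *: (1 + 'X^D) != 0.
  by rewrite scaler_eq0 lead_g (negPf lead_g_neq0) -size_poly_eq0 size_1X.
split.
  apply: (separable_coprime (separable_1addXn D_neq0)).
  by rewrite -lead_coefM shear_AB lead_coef_poly //= dvdpZl ?lead_g.
apply: (size_lead_coef_triangular_factor (triangular_shear A) (triangular_shear B)) => //.
by rewrite shear_AB lead_coef_poly // size_poly_eq //= size_scale ?size_1X ?lead_g.
Qed.

Lemma sum_factor_bconst (A B : {poly {poly L}}) :
  P = A * B -> ~~ bconst A -> ~~ bconst B -> False.
Proof.
move=> PAB nconst_A nconst_B.
have [_ lead_P] := size_sum_lead_coef.
have lead_g_neq0 : lead_coef g != 0 by rewrite lead_coef_eq0 -size_poly_eq0 size_g.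
have [a a_neq0 lead_A] : exists2 a, a != 0 & lead_coef A = a%:P.
  by apply: (@lead_coef_factor_const _ _ B (lead_coef g)); rewrite -?PAB.
have [b b_neq0 lead_B] : exists2 b, b != 0 & lead_coef B = b%:P.
  by apply: (@lead_coef_factor_const _ _ A (lead_coef g)); rewrite // mulrC -PAB.
have size_A := bconstN_size_gt1 lead_A nconst_A.
have size_B := bconstN_size_gt1 lead_B nconst_B.
have [U [V bezout]] := bezout_of_no_common_root lead_A a_neq0 lead_B b_neq0
  size_A size_B (factors_no_common_root PAB).
have size_shear_A := leq_trans size_A (leq_size_shear lead_A a_neq0).
have size_shear_B := leq_trans size_B (leq_size_shear lead_B b_neq0).
have shear_A_neq0 : shear A != 0 by rewrite -size_poly_eq0 -lt0n ltnW.
have shear_B_neq0 : shear B != 0 by rewrite -size_poly_eq0 -lt0n ltnW.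
have [coprime_lead size_lead_A] := shear_factors_lead_coef PAB shear_A_neq0 shear_B_neq0.
have /eqP := congr1 shear bezout; rewrite rmorphD !rmorphM rmorph1; apply/negP.
by apply: triangular_no_bezout; rewrite ?size_lead_A //; apply: triangular_shear.
Qed.

Lemma sum_irreducible : irreducible2 P.
Proof.
have [size_P _] := size_sum_lead_coef; split.
  apply/negP => /eqP P_const; have := size_polyC_leq1 ((P`_0)`_0)%:P.
  by rewrite -P_const size_P ltnS leqn0 => /eqP D0; move: D_gt0; rewrite D0.
move=> A B PAB; have [|nconst_A] := boolP (bconst A); first by left.
have [|nconst_B] := boolP (bconst B); first by right.
by case: (sum_factor_bconst PAB nconst_A nconst_B).
Qed.

End SumOfIterates.

Theorem mainTheorem6 (F : finFieldType) (L : closedFieldType)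
    (iota : {rmorphism F -> L}) (a c : F) (r : nat) :
  ~~ (2%N \in [pchar F]) ->
  a != 0 ->
  (1 <= r)%N ->
  (forall i j : nat, (i < j <= r)%N ->
     (piter (a *: 'X^2 + c%:P) i).[0] != (piter (a *: 'X^2 + c%:P) j).[0]) ->
  forall j : nat, (j < r)%N ->
    let g : {poly L} := map_poly iota (piter (a *: 'X^2 + c%:P) j) in
    let Fj := homog (2 ^ j) g in
    (forall u v w : L, (u, v, w) != (0, 0, 0) ->
       ~ [/\ (dOuter Fj).[u, w] = 0, (dOuter Fj).[v, w] = 0
           & (dInner Fj).[u, w] + (dInner Fj).[v, w] = 0]) /\
    irreducible2 (g ^:P + g%:P).
Proof.
move=> char2 a_neq0 _ orbit_uniq j jr g Fj.
have two_neq0 : 2%:R != 0 :> F by apply: contra char2 => two0; rewrite inE /= two0.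
have size_g : size g = (2 ^ j).+1 by rewrite size_map_poly size_piter_quad.
have D_gt0 : (0 < 2 ^ j)%N by rewrite expn_gt0.
have D_neq0 : (2 ^ j)%:R != 0 :> L.
  by rewrite natrX expf_neq0 // -(rmorph_nat iota) fmorph_eq0.
have smooth : smooth_sum g := piter_quad_smooth_sum two_neq0 a_neq0 orbit_uniq jr.
split; first exact: homog_sum_gradient_neq0.
exact: sum_irreducible size_g D_gt0 D_neq0 smooth.
Qed.
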